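(* Let $a,\Theta\in l_0(\mathbb{Z})$ with $\Theta^\star=\Theta$ and $\det\mathcal M_{a,\Theta}(z)\not\equiv0$. Then $\det\mathcal M_{a,\Theta}(z)\le0$ for all $z\in\mathbb{T}$ if and only if $s^+_{a,\Theta}=s^-_{a,\Theta}=1$.
   Context: $l_0(\mathbb{Z})$: finitely supported sequences $u$, with $u(z)=\sum_ku(k)z^k$ and $u^\star(z)=\sum_k\overline{u(k)}z^{-k}$. $\mathbb{T}$ is the unit circle. $\mathcal M_{a,\Theta}(z)=\begin{bmatrix}\Theta(z)-\Theta(z^2)a(z)a^\star(z)&-\Theta(z^2)a(z)a^\star(-z)\\-\Theta(z^2)a(-z)a^\star(z)&\Theta(-z)-\Theta(z^2)a(-z)a^\star(-z)\end{bmatrix}$, which is Hermitian for $z\in\mathbb{T}$. $s^\pm_{a,\Theta}:=\max_{z\in\mathbb{T}}\nu_\pm(\mathcal M_{a,\Theta}(z))$ where $\nu_\pm(H)$ are the numbers of positive/negative eigenvalues of a Hermitian matrix $H$. *)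

From HB Require Import structures.
From mathcomp Require Import all_boot all_order all_algebra.
Set Implicit Arguments. Unset Strict Implicit. Unset Printing Implicit Defensive.
Import Order.TTheory GRing.Theory Num.Theory.
Local Open Scope ring_scope.

(* A finitely supported sequence u in l_0(Z) is represented by a pair
   (m, s) : int * seq C meaning u(m + i) = s_i for i < size s and u(k) = 0
   for all other k.  Every finitely supported sequence arises this way. *)
Definition l0 (C : numClosedFieldType) := (int * seq C)%type.

Definition lcoef (C : numClosedFieldType) (u : l0 C) (k : int) : C :=
  match k - u.1 with
  | Posz n => nth 0 u.2 n
  | Negz _ => 0
  end.

Definition leval (C : numClosedFieldType) (u : l0 C) (z : C) : C :=
  \sum_(i < size u.2) lcoef u (u.1 + (i : nat)%:Z) * z ^ (u.1 + (i : nat)%:Z).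

Definition lstar_eval (C : numClosedFieldType) (u : l0 C) (z : C) : C :=
  \sum_(i < size u.2)
     (lcoef u (u.1 + (i : nat)%:Z))^* * z ^ (- (u.1 + (i : nat)%:Z)).

Definition self_star (C : numClosedFieldType) (u : l0 C) : Prop :=
  forall k : int, lcoef u (- k) = (lcoef u k)^*.

Definition on_T (C : numClosedFieldType) (z : C) : Prop := `|z| = 1.

Definition Mmat (C : numClosedFieldType) (a Th : l0 C) (z : C) : 'M[C]_2 :=
  \matrix_(i < 2, j < 2)
    if (i == 0 :> nat) then
      if (j == 0 :> nat) then
        leval Th z - leval Th (z ^+ 2) * leval a z * lstar_eval a z
      else - (leval Th (z ^+ 2) * leval a z * lstar_eval a (- z))
    else
      if (j == 0 :> nat) then
        - (leval Th (z ^+ 2) * leval a (- z) * lstar_eval a z)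
      else leval Th (- z) - leval Th (z ^+ 2) * leval a (- z) * lstar_eval a (- z).

(* eigenvalues of a square matrix, listed with algebraic multiplicity:
   the roots of its characteristic polynomial *)
Definition eigs (C : numClosedFieldType) (n : nat) (H : 'M[C]_n) : seq C :=
  sval (closed_field_poly_normal (char_poly H)).

Definition nu_pos (C : numClosedFieldType) (n : nat) (H : 'M[C]_n) : nat :=
  count (fun x => 0 < x) (eigs H).
Definition nu_neg (C : numClosedFieldType) (n : nat) (H : 'M[C]_n) : nat :=
  count (fun x => x < 0) (eigs H).

Definition max_on_T_eq (C : numClosedFieldType) (f : C -> nat) (k : nat) : Prop :=
  (exists2 z, on_T z & f z = k) /\ (forall z, on_T z -> (f z <= k)%N).

Definition s_pos_eq (C : numClosedFieldType) (a Th : l0 C) (k : nat) : Prop :=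
  max_on_T_eq (fun z => nu_pos (Mmat a Th z)) k.
Definition s_neg_eq (C : numClosedFieldType) (a Th : l0 C) (k : nat) : Prop :=
  max_on_T_eq (fun z => nu_neg (Mmat a Th z)) k.

(* On the unit circle the self-adjointness of Theta makes every Theta(w) real
   and u^star(z) the conjugate of u(z), so M_{a,Theta}(z) is a Hermitian 2x2
   matrix.  Its two eigenvalues are then real, with product det M(z).  Two
   real numbers have at most one positive and at most one negative member
   exactly when their product is <= 0, and exactly one of each when the
   product is < 0; the latter occurs at the point where det M does not
   vanish, which gives the maxima s^+ = s^- = 1. *)
From HB Require Import structures.
From mathcomp Require Import all_boot all_order all_algebra.
From mathcomp Require Import ring.
Import Order.TTheory GRing.Theory Num.Theory.
Local Open Scope ring_scope.
Set Implicit Arguments. Unset Strict Implicit.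

Section Matrix2.
Variable R : comNzRingType.
Implicit Type A : 'M[R]_2.

Lemma det_mx2 A : \det A = A 0 0 * A 1 1 - A 0 1 * A 1 0.
Proof.
rewrite (expand_det_row _ 0) !big_ord_recl big_ord0 /cofactor !det_mx11 /= !mxE.
have -> : lift 0 0 = 1 :> 'I_2 by apply: val_inj.
have -> : lift 1 0 = 0 :> 'I_2 by apply: val_inj.
by rewrite /bump /= expr0 expr1 mul1r mulN1r addr0 mulrN.
Qed.

Lemma mxtrace_mx2 A : \tr A = A 0 0 + A 1 1.
Proof.
rewrite /mxtrace !big_ord_recl big_ord0 addr0.
by have -> : lift ord0 ord0 = 1 :> 'I_2 by apply: val_inj.
Qed.

End Matrix2.

Lemma eigs_mx2 (C : numClosedFieldType) (A : 'M[C]_2) :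
  exists l1 l2, [/\ eigs A = [:: l1; l2], l1 + l2 = \tr A & l1 * l2 = \det A].
Proof.
rewrite /eigs; case: (closed_field_poly_normal _) => r /=.
rewrite (monicP (char_poly_monic A)) scale1r => charE.
have := size_char_poly A; rewrite charE size_prod_XsubC.
case: r charE => [|l1 [|l2 []]] //= charE _; exists l1, l2.
have quadE : ('X - l1%:P) * ('X - l2%:P)
    = 'X^2 - (l1 + l2) *: 'X + (l1 * l2)%:P :> {poly C}.
  by rewrite polyCM -!mul_polyC polyCD; ring.
have := char_poly_trace A isT; have := char_poly_det A.
rewrite charE !big_cons big_nil mulr1 quadE.
rewrite !coefD !coefN !coefZ !coefX !coefC !coefXn /=.
rewrite expr2 mulN1r opprK mul1r mulr0 subr0 add0r => detE.
by rewrite mulr1 sub0r addr0 => /oppr_inj.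
Qed.

Lemma real_of_addr_sqr_subr (R : numFieldType) (x y : R) :
  x + y \is Num.real -> 0 <= (x - y) ^+ 2 -> x \is Num.real /\ y \is Num.real.
Proof.
rewrite -realEsqr => Rxy Rx_y.
have Rx : x \is Num.real.
  have -> : x = ((x + y) + (x - y)) / 2%:R.
    by apply: (mulIf (x := 2%:R)); rewrite ?pnatr_eq0 // divfK ?pnatr_eq0 //
      mulr_natr mulr2n; ring.
  by rewrite rpredM ?(rpredD Rxy Rx_y) // ger0_real // invr_ge0 ler0n.
split=> //; have -> : y = (x + y) - x by ring.
exact: rpredB.
Qed.

Lemma eigs_hermitian_mx2 (C : numClosedFieldType) (A : 'M[C]_2) :
  A 0 0 \is Num.real -> A 1 1 \is Num.real -> A 1 0 = (A 0 1)^* ->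
  exists l1 l2, [/\ eigs A = [:: l1; l2], l1 \is Num.real, l2 \is Num.real
                  & l1 * l2 = \det A].
Proof.
move=> RA RD A10E; have [l1 [l2 [eigsE trE detE]]] := eigs_mx2 A.
suff [R1 R2] : l1 \is Num.real /\ l2 \is Num.real by exists l1, l2.
apply: real_of_addr_sqr_subr; first by rewrite trE mxtrace_mx2 rpredD.
(* the discriminant of a Hermitian matrix is (A00 - A11)^2 + 4 |A01|^2 *)
have -> : (l1 - l2) ^+ 2 = (l1 + l2) ^+ 2 - 4%:R * (l1 * l2) by ring.
rewrite trE detE mxtrace_mx2 det_mx2 A10E.
set a := A 0 0; set d := A 1 1; set b := A 0 1.
have -> : (a + d) ^+ 2 - 4%:R * (a * d - b * b^*)
          = (a - d) ^+ 2 + 4%:R * (b * b^*) by ring.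
apply: addr_ge0; first by rewrite -realEsqr rpredB.
by rewrite mulr_ge0 ?ler0n ?mul_conjC_ge0.
Qed.

Section SignCount.
Variables (R : numDomainType) (l1 l2 : R).
Hypotheses (R1 : l1 \is Num.real) (R2 : l2 \is Num.real).

Lemma count_sign_le1 :
  leq (count (fun x => 0 < x) [:: l1; l2]) 1 &&
  leq (count (fun x => x < 0) [:: l1; l2]) 1 = (l1 * l2 <= 0).
Proof.
case: (real_ltgt0P R1) => h1; case: (real_ltgt0P R2) => h2;
  rewrite /= ?h1 ?h2 ?(lt_gtF h1) ?(lt_gtF h2) ?ltxx ?mulr0 ?mul0r ?lexx //=.
- by rewrite lt_geF ?mulr_gt0.
- by rewrite ltW // pmulr_rlt0.
- by rewrite ltW // nmulr_rlt0.
- by rewrite lt_geF ?nmulr_rgt0.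
Qed.

Lemma count_sign_eq1 : l1 * l2 < 0 ->
  count (fun x => 0 < x) [:: l1; l2] = 1%N /\
  count (fun x => x < 0) [:: l1; l2] = 1%N.
Proof.
case: (real_ltgt0P R1) => h1; case: (real_ltgt0P R2) => h2;
  rewrite /= ?h1 ?h2 ?(lt_gtF h1) ?(lt_gtF h2) ?mulr0 ?mul0r ?ltxx //=.
- by rewrite lt_gtF ?mulr_gt0.
- by rewrite lt_gtF ?nmulr_rgt0.
Qed.

End SignCount.

Lemma eq_big_uniq_support (V : nmodType) (I : eqType) (r1 r2 : seq I) (F : I -> V) :
  uniq r1 -> uniq r2 ->
  (forall i, F i != 0 -> i \in r1) -> (forall i, F i != 0 -> i \in r2) ->
  \sum_(i <- r1) F i = \sum_(i <- r2) F i.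
Proof.
move=> uniq_r1 uniq_r2 supp_r1 supp_r2; apply: perm_big_supp.
apply: uniq_perm; rewrite ?filter_uniq // => i; rewrite !mem_filter.
by case: (boolP (F i != 0)) => // /[dup] /supp_r1 -> /supp_r2 ->.
Qed.

Section LaurentPolynomial.
Variable C : numClosedFieldType.
Implicit Types (u Th : l0 C) (z : C).

Definition lsupp u : seq int := [seq u.1 + (i : nat)%:Z | i <- iota 0 (size u.2)].

Lemma lsupp_uniq u : uniq (lsupp u).
Proof. by rewrite map_inj_uniq ?iota_uniq // => i j /addrI []. Qed.

Lemma lcoef_supp u k : lcoef u k != 0 -> k \in lsupp u.
Proof.
rewrite /lcoef; case kE : (k - u.1) => [n|] //=; last by rewrite eqxx.
apply: contraR => k_notin.
apply/eqP/nth_default; rewrite leqNgt; apply: contra k_notin => lt_n.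
by apply/mapP; exists n; rewrite ?mem_iota // -kE addrC subrK.
Qed.

Lemma leval_lsupp u z : leval u z = \sum_(k <- lsupp u) lcoef u k * z ^ k.
Proof.
by rewrite /leval big_map -[size u.2]subn0 -/(index_iota 0 _) big_mkord subn0.
Qed.

Lemma lstar_eval_lsupp u z :
  lstar_eval u z = \sum_(k <- lsupp u) (lcoef u k)^* * z ^ (- k).
Proof.
by rewrite /lstar_eval big_map -[size u.2]subn0 -/(index_iota 0 _) big_mkord subn0.
Qed.

Lemma conjC_exprz_onT z k : on_T z -> (z ^ k)^* = z ^ (- k).
Proof.
move=> Tz; have z_neq0 : z != 0 by rewrite -normr_eq0 Tz oner_eq0.
have z_unit : z \is a GRing.unit by rewrite unitfE.
have conj_zE : z^* = z^-1.
  by rewrite -[z^*]mul1r -(mulVf z_neq0) -mulrA -normCK Tz expr1n mulr1.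
by rewrite (rmorphXz _ _ z_unit) /= conj_zE exprz_inv.
Qed.

Lemma lstar_evalE u z : on_T z -> lstar_eval u z = (leval u z)^*.
Proof.
move=> Tz; rewrite lstar_eval_lsupp leval_lsupp rmorph_sum.
by apply: eq_bigr => k _; rewrite rmorphM /= conjC_exprz_onT.
Qed.

Lemma leval_self_star_real Th z :
  self_star Th -> on_T z -> leval Th z \is Num.real.
Proof.
move=> ssTh Tz; rewrite CrealE -lstar_evalE // lstar_eval_lsupp leval_lsupp.
under eq_bigr do rewrite -ssTh.
rewrite -(big_map -%R xpredT (fun k => lcoef Th k * z ^ k)).
have coef_neq0 k : lcoef Th k * z ^ k != 0 -> lcoef Th k != 0.
  by rewrite mulf_eq0 negb_or => /andP[].
apply/eqP; apply: eq_big_uniq_support; rewrite ?lsupp_uniq //.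
- by rewrite map_inj_uniq ?lsupp_uniq //; exact: oppr_inj.
- move=> k /coef_neq0 coef_k; apply/mapP; exists (- k); rewrite ?opprK //.
  by apply: lcoef_supp; rewrite -conjC_eq0 -ssTh opprK.
- by move=> k /coef_neq0 /lcoef_supp.
Qed.

Lemma Mmat_hermitian a Th z : self_star Th -> on_T z ->
  [/\ Mmat a Th z 0 0 \is Num.real, Mmat a Th z 1 1 \is Num.real
    & Mmat a Th z 1 0 = (Mmat a Th z 0 1)^*].
Proof.
move=> ssTh Tz.
have TNz : on_T (- z) by rewrite /on_T normrN.
have Tz2 : on_T (z ^+ 2) by rewrite /on_T normrX Tz expr1n.
have RTh2 := leval_self_star_real ssTh Tz2.
have Rnorm w : leval Th (z ^+ 2) * (leval a w * (leval a w)^*) \is Num.real.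
  by rewrite rpredM // ger0_real // mul_conjC_ge0.
rewrite !mxE /= !lstar_evalE //; split.
- by rewrite rpredB ?leval_self_star_real // -mulrA.
- by rewrite rpredB ?leval_self_star_real // -mulrA.
- rewrite rmorphN !rmorphM /= conjCK (conj_Creal RTh2) -!mulrA.
  by rewrite [leval a (- z) * _]mulrC.
Qed.

End LaurentPolynomial.

Theorem mainTheorem16 (C : numClosedFieldType) (a Th : l0 C) :
  self_star Th ->
  (exists2 z : C, on_T z & \det (Mmat a Th z) != 0) ->
  ((forall z : C, on_T z -> \det (Mmat a Th z) <= 0) <->
   (s_pos_eq a Th 1 /\ s_neg_eq a Th 1)).
Proof.
move=> ssTh [z0 Tz0 det_z0]; rewrite /s_pos_eq /s_neg_eq /max_on_T_eq.
have eigsM z : on_T z -> exists l1 l2,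
    [/\ eigs (Mmat a Th z) = [:: l1; l2], l1 \is Num.real, l2 \is Num.real
      & l1 * l2 = \det (Mmat a Th z)].
  by move=> /(Mmat_hermitian a ssTh) [? ? ?]; apply: eigs_hermitian_mx2.
have nu_le1E z : on_T z ->
    leq (nu_pos (Mmat a Th z)) 1 && leq (nu_neg (Mmat a Th z)) 1
    = (\det (Mmat a Th z) <= 0).
  move=> /eigsM [l1 [l2 [eigsE R1 R2 <-]]].
  by rewrite /nu_pos /nu_neg eigsE count_sign_le1.
split=> [det_le0 | [[_ pos_le1] [_ neg_le1]] z Tz]; last first.
  by rewrite -nu_le1E // pos_le1 ?neg_le1.
have [l1 [l2 [eigsE R1 R2 detE]]] := eigsM z0 Tz0.
have [pos1 neg1] : nu_pos (Mmat a Th z0) = 1%N /\ nu_neg (Mmat a Th z0) = 1%N.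
  rewrite /nu_pos /nu_neg eigsE; apply: count_sign_eq1 => //.
  by rewrite lt_neqAle detE det_z0 det_le0.
have nu_le1 z : on_T z ->
    leq (nu_pos (Mmat a Th z)) 1 /\ leq (nu_neg (Mmat a Th z)) 1.
  by move=> Tz; apply/andP; rewrite nu_le1E // det_le0.
by split; split=> [|z /nu_le1 [] //]; exists z0.
Qed.
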